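(* Let $p=(p_i)_{i\in\mathbb{N}}$ be a cookie environment with $p_i\in[\frac12,1)$ for all $i$, and suppose $\delta=\sum_{i=1}^\infty(2p_i-1)<\infty$. Let $\rho(x)=\mathbb{E}[U_p(x)]-x$. Then $\lim_{x\to\infty}\rho(x)=\delta$, and furthermore $\rho(x)\le\delta$ for all positive integers $x$.
   Context: For a cookie environment $p$, let $B_1,B_2,\dots$ be independent Bernoulli random variables with $\Pr[B_i=1]=p_i$ ($B_i=1$ is a ''success'', $B_i=0$ a ''failure''). For a positive integer $x$, $U_p(x)=\inf\{k\in\mathbb{N}:\sum_{i=1}^k(1-B_i)=x\}-x$, i.e. the number of successes before the $x$-th failure. *)

From HB Require Import structures.
From mathcomp Require Import all_boot all_order all_algebra.
From mathcomp Require Import all_classical all_reals all_analysis.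
Set Implicit Arguments. Unset Strict Implicit. Unset Printing Implicit Defensive.
Import Order.TTheory GRing.Theory Num.Theory numFieldNormedType.Exports.
Local Open Scope classical_set_scope.
Local Open Scope ring_scope.

(* Trials are indexed from 0: [B i] stands for the paper's B_{i+1},
   and [p i] for the paper's p_{i+1}. *)

Definition mutually_independent_bool d (T : measurableType d) (R : realType)
    (P : probability T R) (B : nat -> T -> bool) : Prop :=
  forall (s : seq nat) (b : nat -> bool), uniq s ->
    P (\bigcap_(i in [set` s]) [set w | B i w = b i]) =
    (\prod_(i <- s) P [set w | B i w = b i])%E.

Definition nfail T (B : nat -> T -> bool) (k : nat) (w : T) : nat :=
  \sum_(i < k) (~~ B i w : nat).

(* U_p(x) = inf{k : sum_{i<=k} (1 - B_i) = x} - x, an extended real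
   (equal to +oo when the x-th failure never occurs). *)
Definition Ucookie (R : realType) T (B : nat -> T -> bool) (x : nat) (w : T)
  : \bar R :=
  ereal_inf [set ((k - x)%:R)%:E | k in [set k | nfail B k w = x]].

From HB Require Import structures.
From mathcomp Require Import all_boot all_order all_algebra.
From mathcomp Require Import all_classical all_reals all_analysis.
From mathcomp Require Import ring lra zify.
Set Implicit Arguments. Unset Strict Implicit. Unset Printing Implicit Defensive.
Import Order.TTheory GRing.Theory Num.Theory numFieldNormedType.Exports.
Local Open Scope classical_set_scope.
Local Open Scope ring_scope.

(* U_p(x) counts the trials i that succeed while fewer than x failures have occurred
   before i.  These two events are independent, so E U_p(x) = sum_i p_i r_i(x), where
   r_i(x) is the probability of fewer than x failures among the first i trials.  Split
   p_i = (1 - p_i) + (2 p_i - 1).  The first series sums the probabilities that trial i is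
   one of the first x failures; its N-th partial sum is E[min(F_N, x)], with F_N the number
   of failures among the first N trials, so it tends to x once r_N(y) -> 0 for y <= x, which
   holds because r_i(x) <= 2 (1 - p_i) r_i(x) + (2 p_i - 1) is summable.  Hence
   rho(x) = sum_i (2 p_i - 1) r_i(x), which lies between sum_(i < x) (2 p_i - 1)
   (as r_i(x) = 1 for i < x) and delta. *)

Section RealProbability.
Context {d : measure_display} {T : measurableType d} {R : realType}.
Variable P : probability T R.

Definition pr (A : set T) : R := fine (P A).

Lemma prE A : measurable A -> (pr A)%:E = P A.
Proof. by move=> mA; rewrite /pr fineK // fin_num_measure. Qed.

Lemma pr_ge0 A : 0 <= pr A.
Proof. exact: fine_ge0. Qed.

Lemma pr_le1 A : measurable A -> pr A <= 1.
Proof. by move=> mA; rewrite -lee_fin prE // probability_le1. Qed.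

Lemma pr0 : pr set0 = 0.
Proof. by rewrite /pr measure0. Qed.

Lemma prT : pr setT = 1.
Proof. by rewrite /pr probability_setT. Qed.

Lemma prC A : measurable A -> pr (~` A) = 1 - pr A.
Proof.
move=> mA; apply: EFin_inj.
by rewrite prE ?EFinB ?prE ?probability_setC //; exact: measurableC.
Qed.

Lemma prU A C : measurable A -> measurable C -> A `&` C = set0 ->
  pr (A `|` C) = pr A + pr C.
Proof.
move=> mA mC AC; apply: EFin_inj.
by rewrite EFinD !prE ?measureU //; exact: measurableU.
Qed.

End RealProbability.

Section FailureCount.
Variables (T : Type) (B : nat -> T -> bool) (w : T).
Local Notation nf k := (nfail B k w).

Lemma nfail0 : nf 0 = 0%N.
Proof. by rewrite /nfail big_ord0. Qed.

Lemma nfailS k : nf k.+1 = (nf k + ~~ B k w)%N.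
Proof. by rewrite /nfail big_ord_recr. Qed.

Lemma nfail_le k : (nf k <= k)%N.
Proof. by elim: k => [|k IH]; rewrite ?nfail0 // nfailS; case: (B k w) => /=; lia. Qed.

Lemma nfail_mono m n : (m <= n)%N -> (nf m <= nf n)%N.
Proof.
move=> /subnK <-; elim: (n - m)%N => [|k IH] //.
by rewrite addSn nfailS (leq_trans IH) ?leq_addr.
Qed.

Lemma nsucc_add_nfail k : (\sum_(0 <= i < k) B i w + nf k)%N = k.
Proof.
elim: k => [|k IH]; first by rewrite big_geq // nfail0.
by rewrite big_nat_recr //= nfailS; move: IH; case: (B k w) => /=; lia.
Qed.

Definition nsucc_before (x N : nat) : nat := \sum_(0 <= i < N) (B i w && (nf i < x)%N).

Lemma nsucc_before_hit x k N : nf k = x -> (forall i, (i < k)%N -> (nf i < x)%N) ->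
  (k <= N)%N -> nsucc_before x N = (k - x)%N.
Proof.
move=> hk before_k kN; rewrite /nsucc_before (@big_cat_nat _ _ _ k) // /=.
have -> : (\sum_(k <= i < N) (B i w && (nf i < x)%N) = 0)%N.
  rewrite big_nat_cond big1 // => i /andP[/andP[ki _] _].
  by rewrite ltnNge -hk (nfail_mono ki) andbF.
rewrite addn0 (eq_big_nat _ _ (F2 := fun i => B i w : nat)) => [|i /andP[_ ik]].
  by have := nsucc_add_nfail k; lia.
by rewrite before_k ?andbT.
Qed.

Lemma nfail_lt_nohit x : (forall k, nf k <> x) -> forall k, (nf k < x)%N.
Proof.
move=> nohit; elim => [|k IH].
  by rewrite nfail0 lt0n; apply/eqP => x0; apply: (nohit 0%N); rewrite nfail0.
rewrite ltn_neqAle nfailS; apply/andP; split; first by apply/eqP; rewrite -nfailS.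
by case: (B k w) => /=; lia.
Qed.

Lemma nsucc_before_nohit x N : (forall k, nf k <> x) -> (N - x <= nsucc_before x N)%N.
Proof.
move=> /nfail_lt_nohit lt_x; rewrite /nsucc_before.
rewrite (eq_big_nat _ _ (F2 := fun i => B i w : nat)) => [|i _]; last by rewrite lt_x andbT.
by have := nsucc_add_nfail N; have := lt_x N; lia.
Qed.

Variable R : realType.

Lemma Ucookie_hit x k : nf k = x -> (forall i, (i < k)%N -> (nf i < x)%N) ->
  Ucookie R B x w = ((k - x)%:R)%:E.
Proof.
move=> hk before_k; apply/eqP; rewrite eq_le; apply/andP; split.
  by apply: ereal_inf_lbound; exists k.
apply/ereal_infP => _ [j /= hj <-]; rewrite lee_fin ler_nat leq_sub2r //.
by rewrite leqNgt; apply/negP => /before_k; rewrite hj ltnn.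
Qed.

Lemma Ucookie_nohit x : (forall k, nf k <> x) -> Ucookie R B x w = +oo%E.
Proof.
move=> nohit; rewrite /Ucookie (_ : [set k | nf k = x] = set0) ?image_set0 ?ereal_inf0 //.
by apply/seteqP; split => k // /nohit.
Qed.

Lemma Ucookie_series x :
  Ucookie R B x w = (\sum_(0 <= i <oo) ((B i w && (nf i < x)%N : nat)%:R%:E))%E.
Proof.
have partial N : (\sum_(0 <= i < N) ((B i w && (nf i < x)%N : nat)%:R%:E))%E =
    ((nsucc_before x N)%:R : R)%:E.
  by rewrite sumEFin natr_sum.
have [[k0 hk0] | nohit] := pselect (exists k, nf k = x); last first.
  have {}nohit k : nf k <> x by move=> hk; apply: nohit; exists k.
  rewrite Ucookie_nohit //; apply/esym/eq_infty => r.
  have := @nneseries_lim_ge R (fun i => ((B i w && (nf i < x)%N : nat)%:R)%:E) xpredT 0%N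
    (x + (Num.truncn r).+1)%N (fun i _ _ => lee0n _).
  apply: le_trans; rewrite partial lee_fin; apply: (le_trans (ltW (truncnS_gt r))); rewrite ler_nat.
  by apply: leq_trans _ (nsucc_before_nohit _ nohit); rewrite addKn.
case: (ex_minnP (ex_intro (fun k => nf k == x) k0 (introT eqP hk0))) => k /eqP hk mink.
have before_k i : (i < k)%N -> (nf i < x)%N.
  move=> ik; rewrite ltn_neqAle -{2}hk (nfail_mono (ltnW ik)) andbT.
  by apply/eqP => /eqP/mink; rewrite leqNgt ik.
rewrite (Ucookie_hit hk before_k); apply/esym/cvg_lim => //.
apply: cvg_near_cst; near=> N; rewrite partial (nsucc_before_hit hk before_k) //.
by near: N; exists k.
Unshelve. all: end_near.
Qed.

End FailureCount.

Lemma set_seq_cons (X : eqType) (x : X) (s : seq X) : [set` (x :: s)] = x |` [set` s].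
Proof.
apply/seteqP; split => y /=; rewrite inE; first by case/orP => [/eqP|]; [left|right].
by case=> [->|->]; rewrite ?eqxx ?orbT.
Qed.

Section Cookie.
Context {d : measure_display} {T : measurableType d} {R : realType}.
Variables (P : probability T R) (p : nat -> R) (B : nat -> T -> bool).
Hypothesis mB : forall i, measurable [set w | B i w = true].
Hypothesis PB : forall i, P [set w | B i w = true] = (p i)%:E.
Hypothesis indep : mutually_independent_bool P B.

Local Notation pr := (pr P).

Definition trial i c := [set w | B i w = c].

Lemma trial_false i : trial i false = ~` trial i true.
Proof. by rewrite /trial; apply/seteqP; split => w /=; case: (B i w) => // /(_ erefl). Qed.

Lemma measurable_trial i c : measurable (trial i c).
Proof. by case: c; rewrite ?trial_false; [|apply: measurableC]; exact: mB. Qed.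

Lemma pr_trial i c : pr (trial i c) = if c then p i else 1 - p i.
Proof.
have pr_success : pr (trial i true) = p i by apply: EFin_inj; rewrite prE ?PB //; exact: mB.
by case: c; rewrite ?trial_false ?prC ?pr_success //; exact: mB.
Qed.

Lemma p_le1 i : p i <= 1.
Proof. by rewrite -(pr_trial i true) pr_le1 //; exact: measurable_trial. Qed.

Definition fewfail n y := [set w | (nfail B n w < y)%N].

Lemma fewfailn0 n : fewfail n 0 = set0.
Proof. by apply/seteqP; split => w. Qed.

Lemma fewfail0S y : fewfail 0 y.+1 = setT.
Proof. by apply/seteqP; split => w //= _; rewrite /fewfail /= nfail0. Qed.

Lemma fewfailS n y :
  fewfail n.+1 y.+1 = (fewfail n y.+1 `&` trial n true) `|` (fewfail n y `&` trial n false).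
Proof.
apply/seteqP; split => w /=; rewrite /fewfail /trial /= nfailS.
  by case: (B n w) => /=; rewrite ?addn0 ?addn1 ?ltnS; [left|right].
by case: (B n w) => /= -[[+ e]|[+ e]] //; rewrite ?addn0 ?addn1 ?ltnS.
Qed.

Lemma measurable_fewfail n y : measurable (fewfail n y).
Proof.
elim: n y => [|n IH] [|y]; rewrite ?fewfailn0 ?fewfail0S // fewfailS.
by apply: measurableU; apply: measurableI => //; exact: measurable_trial.
Qed.

Lemma pr_fewfailSI n y C : measurable C ->
  pr (fewfail n.+1 y.+1 `&` C) =
  pr (fewfail n y.+1 `&` (trial n true `&` C)) + pr (fewfail n y `&` (trial n false `&` C)).
Proof.
move=> mC; have mF := measurable_fewfail; have mT := measurable_trial.
rewrite fewfailS setIUl -!setIA prU //; try by apply: measurableI => //; exact: measurableI.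
by apply/seteqP; split => w // [[_ [t _]] [_ [f _]]]; rewrite /trial /= t in f.
Qed.

Definition cylinder (s : seq nat) (b : nat -> bool) := \bigcap_(i in [set` s]) trial i (b i).

Lemma measurable_cylinder s b : measurable (cylinder s b).
Proof.
by apply: fin_bigcap_measurable; [exact: finite_seq|move=> i _; exact: measurable_trial].
Qed.

Lemma cylinder_nil b : cylinder [::] b = setT.
Proof. by rewrite /cylinder set_nil bigcap_set0. Qed.

Lemma pr_cylinder s b : uniq s -> pr (cylinder s b) = \prod_(i <- s) pr (trial i (b i)).
Proof.
move=> us; apply: EFin_inj; rewrite prE; last exact: measurable_cylinder.
rewrite /cylinder /trial indep //.
by rewrite -prodEFin; apply: eq_bigr => i _; rewrite prE //; exact: measurable_trial.
Qed.

Lemma trialI_cylinder n c s b : n \notin s ->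
  trial n c `&` cylinder s b = cylinder (n :: s) (fun i => if i == n then c else b i).
Proof.
move=> ns; rewrite /cylinder set_seq_cons bigcap_setU1 eqxx; congr (_ `&` _).
by apply: eq_bigcapr => i /= si; case: eqP => // ein; rewrite -ein si in ns.
Qed.

Lemma pr_trialI_cylinder n c s b : n \notin s -> uniq s ->
  pr (trial n c `&` cylinder s b) = pr (trial n c) * pr (cylinder s b).
Proof.
move=> ns us; rewrite trialI_cylinder // pr_cylinder /= ?ns // big_cons eqxx pr_cylinder //.
by congr (_ * _); apply: eq_big_seq => i si; case: eqP => // ein; rewrite -ein si in ns.
Qed.

(* The event [fewfail n y] depends only on the first [n] trials. *)
Lemma pr_fewfailI_cylinder n y s b : uniq s -> all (fun i => n <= i)%N s ->
  pr (fewfail n y `&` cylinder s b) = pr (fewfail n y) * pr (cylinder s b).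
Proof.
elim: n y s b => [|n IH] [|y] s b us s_ge; rewrite ?fewfailn0 ?fewfail0S ?set0I ?setTI
  ?pr0 ?prT ?mul0r ?mul1r //.
have step s' b' : uniq s' -> all (fun i => n < i)%N s' ->
    pr (fewfail n.+1 y.+1 `&` cylinder s' b') =
    (pr (fewfail n y.+1) * p n + pr (fewfail n y) * (1 - p n)) * pr (cylinder s' b').
  move=> us' s'_gt; have ns' : n \notin s' by apply/negP => /(allP s'_gt); rewrite ltnn.
  have us_n : uniq (n :: s') by rewrite /= ns'.
  have ge_n : all (fun i => n <= i)%N (n :: s').
    by rewrite /= leqnn; apply/allP => i /(allP s'_gt) /ltnW.
  rewrite pr_fewfailSI; last exact: measurable_cylinder.
  rewrite !trialI_cylinder // !IH // -!trialI_cylinder // !pr_trialI_cylinder //.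
  by rewrite !pr_trial; ring.
(* the empty cylinder identifies the bracket with [pr (fewfail n.+1 y.+1)] *)
rewrite step //; have := step [::] b isT isT.
by rewrite cylinder_nil setIT prT mulr1 => <-.
Qed.

Lemma pr_fewfailI_trial n y c :
  pr (fewfail n y `&` trial n c) = pr (fewfail n y) * pr (trial n c).
Proof.
have := @pr_fewfailI_cylinder n y [:: n] (fun _ => c) isT.
by rewrite /= leqnn /cylinder set_cons1 bigcap_set1 => ->.
Qed.

Definition fewfail_prob n y := pr (fewfail n y).
Local Notation r := fewfail_prob.

Lemma fewfail_prob_ge0 n y : 0 <= r n y. Proof. exact: pr_ge0. Qed.
Lemma fewfail_prob_le1 n y : r n y <= 1. Proof. exact/pr_le1/measurable_fewfail. Qed.

Lemma fewfail_prob_early n y : (n < y)%N -> r n y = 1.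
Proof.
move=> ny; rewrite /fewfail_prob (_ : fewfail n y = setT) ?prT //.
by apply/seteqP; split => w //= _; exact: leq_ltn_trans (nfail_le B w n) ny.
Qed.

Lemma fewfail_probS n y : r n.+1 y.+1 = p n * r n y.+1 + (1 - p n) * r n y.
Proof.
have := @pr_fewfailSI n y setT measurableT.
by rewrite !setIT /fewfail_prob => ->; rewrite !pr_fewfailI_trial !pr_trial; ring.
Qed.

(* Both sides equal E[min(nfail B N w, x)]. *)
Lemma sum_fail_fewfail_prob x N :
  \sum_(0 <= n < N) (1 - p n) * r n x = x%:R - \sum_(y < x) r N y.+1.
Proof.
elim: N => [|N IH].
  rewrite big_geq // (eq_bigr (fun _ => 1)) => [|y _]; last by rewrite /fewfail_prob fewfail0S prT.
  by rewrite sumr_const card_ord subrr.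
have tele : \sum_(y < x) (r N y.+1 - r N y) = r N x.
  rewrite -(big_mkord xpredT (fun y => r N y.+1 - r N y)) telescope_sumr //.
  by rewrite /fewfail_prob fewfailn0 pr0 subr0.
have sum_next : \sum_(y < x) r N.+1 y.+1 = \sum_(y < x) r N y.+1 - (1 - p N) * r N x.
  by rewrite -tele mulr_sumr -sumrB; apply: eq_bigr => y _; rewrite fewfail_probS; ring.
by rewrite big_nat_recr //= IH sum_next; ring.
Qed.

Lemma Ucookie_indic_series x w :
  Ucookie R B x w = (\sum_(0 <= i <oo) (\1_(trial i true `&` fewfail i x) w : R)%:E)%E.
Proof.
rewrite Ucookie_series; congr (limn _); apply/funext => N; apply: eq_bigr => i _.
rewrite indicE; congr (_%:R%:E); congr (nat_of_bool _).
by apply/idP/idP => [/andP[bi ni]|/set_mem[/= -> ->]] //; exact/mem_set.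
Qed.

Lemma integral_Ucookie x :
  (\int[P]_w Ucookie R B x w)%E = (\sum_(0 <= i <oo) (p i * r i x)%:E)%E.
Proof.
have mTF i : measurable (trial i true `&` fewfail i x).
  by apply: measurableI; [exact: measurable_trial|exact: measurable_fewfail].
under eq_integral => w _ do rewrite Ucookie_indic_series.
rewrite integral_nneseries //; last first.
  move=> i; apply/measurable_realfun.measurable_EFinP.
  exact: measurable_realfun.measurable_indic.
apply: eq_eseriesr => i _; rewrite integral_indic // setIT.
by rewrite /fewfail_prob mulrC -(pr_trial i true) -pr_fewfailI_trial setIC prE // setIC.
Qed.

Hypothesis p_ge : forall i, 1 / 2 <= p i.
Variable delta : R.
Hypothesis hdelta : series (fun i => 2 * p i - 1) @ \oo --> delta.

Lemma drift_ge0 n : 0 <= 2 * p n - 1.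
Proof. by have := p_ge n; lra. Qed.

Lemma fail_ge0 n : 0 <= 1 - p n.
Proof. by rewrite subr_ge0 p_le1. Qed.

Lemma series_drift_le N : series (fun i => 2 * p i - 1) N <= delta.
Proof.
rewrite -(cvg_lim _ hdelta) //; apply: nondecreasing_cvgn_le; last exact: cvgP hdelta.
by apply: nondecreasing_series => n _ _; exact: drift_ge0.
Qed.

Lemma cvg_fewfail_prob0 x : (fun n => r n x) @ \oo --> 0.
Proof.
have cvg_fail : cvgn (series (fun n => (1 - p n) * r n x)).
  apply: nondecreasing_is_cvgn.
    by apply: nondecreasing_series => n _ _; rewrite mulr_ge0 ?fail_ge0 ?fewfail_prob_ge0.
  exists x%:R => _ [N _ <-]; rewrite /series /= sum_fail_fewfail_prob // lerBlDr lerDl.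
  by apply: sumr_ge0 => y _; exact: fewfail_prob_ge0.
have dominate : (fun n => (1 - p n) * r n x + (1 - p n) * r n x + (2 * p n - 1)) @ \oo --> (0 : R).
  have fail0 := cvg_series_cvg_0 cvg_fail.
  have drift0 := cvg_series_cvg_0 (cvgP _ hdelta).
  by rewrite -[0 : R]addr0 -[X in X + _]addr0; do 2 apply: cvgD => //.
apply: (squeeze_cvgr _ (cvg_cst 0) dominate); apply: nearW => n.
(* the bound amounts to (2 p - 1)(1 - r) >= 0 *)
by rewrite fewfail_prob_ge0 /=; have := fewfail_prob_le1 n x; have := drift_ge0 n; nra.
Qed.

Lemma cvg_series_fail x : series (fun n => (1 - p n) * r n x) @ \oo --> (x%:R : R).
Proof.
have -> : series (fun n => (1 - p n) * r n x) = (fun N => x%:R - \sum_(y < x) r N y.+1).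
  by apply/funext => N; rewrite /series /= sum_fail_fewfail_prob.
rewrite -[X in _ --> X]subr0; apply: cvgB; first exact: cvg_cst.
elim: x => [|x IH]; first by under eq_fun do rewrite big_ord0; exact: cvg_cst.
have -> : (fun N => \sum_(y < x.+1) r N y.+1) = (fun N => \sum_(y < x) r N y.+1 + r N x.+1).
  by apply/funext => N; rewrite big_ord_recr.
by rewrite -[X in _ --> X](addr0 0); apply: cvgD IH (cvg_fewfail_prob0 _).
Qed.

Definition rho x := limn (series (fun n => (2 * p n - 1) * r n x)).

Lemma series_drift_r_le x N :
  series (fun n => (2 * p n - 1) * r n x) N <= series (fun i => 2 * p i - 1) N.
Proof. by apply: ler_sum => i _; rewrite ler_piMr ?drift_ge0 ?fewfail_prob_le1. Qed.

Lemma nondecreasing_series_drift_r x :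
  nondecreasing_seq (series (fun n => (2 * p n - 1) * r n x)).
Proof. by apply: nondecreasing_series => n _ _; rewrite mulr_ge0 ?drift_ge0 ?fewfail_prob_ge0. Qed.

Lemma is_cvg_series_drift_r x : cvgn (series (fun n => (2 * p n - 1) * r n x)).
Proof.
apply: nondecreasing_is_cvgn; first exact: nondecreasing_series_drift_r.
by exists delta => _ [N _ <-]; exact: le_trans (series_drift_r_le x N) (series_drift_le N).
Qed.

Lemma rho_le x : rho x <= delta.
Proof.
apply: limr_le; first exact: is_cvg_series_drift_r.
by apply: nearW => N; exact: le_trans (series_drift_r_le x N) (series_drift_le N).
Qed.

Lemma series_drift_le_rho x : series (fun i => 2 * p i - 1) x <= rho x.
Proof.
have -> : series (fun i => 2 * p i - 1) x = series (fun n => (2 * p n - 1) * r n x) x.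
  by apply: eq_big_nat => i /andP[_ ix]; rewrite fewfail_prob_early ?mulr1.
apply: nondecreasing_cvgn_le; [exact: nondecreasing_series_drift_r|exact: is_cvg_series_drift_r].
Qed.

Lemma cvg_rho : rho x @[x --> \oo] --> delta.
Proof.
apply: (squeeze_cvgr _ hdelta (cvg_cst delta)).
by apply: nearW => x; rewrite series_drift_le_rho rho_le.
Qed.

Lemma integral_Ucookie_sub x : (\int[P]_w Ucookie R B x w - (x%:R)%:E)%E = (rho x)%:E.
Proof.
have series_p : series (fun n => p n * r n x) @ \oo --> x%:R + rho x.
  have split_p n : p n * r n x = (1 - p n) * r n x + (2 * p n - 1) * r n x by ring.
  have -> : series (fun n => p n * r n x) = series (fun n => (1 - p n) * r n x) \+
      series (fun n => (2 * p n - 1) * r n x).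
    by apply/funext => N; rewrite /series /= -big_split; apply: eq_bigr => n _; exact: split_p.
  by apply: cvgD; [exact: cvg_series_fail|exact: is_cvg_series_drift_r].
have esum : (\sum_(0 <= i <oo) (p i * r i x)%:E)%E = (x%:R + rho x)%:E.
  rewrite -(cvg_lim _ series_p) // -EFin_lim; last exact: cvgP series_p.
  by congr (limn _); apply/funext => N; rewrite /= sumEFin.
by rewrite integral_Ucookie esum -EFinB; congr (_%:E); ring.
Qed.

End Cookie.

Unset Implicit Arguments.

Theorem lemma4p1 (d : measure_display) (T : measurableType d) (R : realType)
  (P : probability T R) (p : nat -> R) (B : nat -> T -> bool) (delta : R) :
  (forall i, 1 / 2 <= p i < 1) ->
  (forall i, measurable [set w | B i w = true]) ->
  (forall i, P [set w | B i w = true] = (p i)%:E) ->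
  mutually_independent_bool P B ->
  series (fun i => 2 * p i - 1) @ \oo --> delta ->
  ((fun x : nat => (\int[P]_w Ucookie R B x w - (x%:R)%:E)%E) @ \oo --> delta%:E)
  /\ (forall x : nat, (0 < x)%N ->
        (\int[P]_w Ucookie R B x w - (x%:R)%:E <= delta%:E)%E).
Proof.
move=> hp mB PB indep hdelta.
have p_ge i : 1 / 2 <= p i by case/andP: (hp i).
have expectation_rho := integral_Ucookie_sub mB PB indep p_ge hdelta.
split.
  under eq_fun do rewrite expectation_rho.
  by apply: cvg_EFin; [exact: nearW|exact: (cvg_rho P mB p_ge hdelta)].
(* the bound holds for [x = 0] as well *)
by move=> x _; rewrite expectation_rho lee_fin (rho_le P mB p_ge hdelta).
Qed.
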